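(* Let $D$ be a connected locally finite C-homogeneous digraph and let $x\in VD$. Then neither the subdigraph induced by $N^+(x)$ nor the subdigraph induced by $N^-(x)$ is isomorphic to the directed cycle $C_4$ of length 4.
   Context: A digraph has an irreflexive, antisymmetric edge relation; connectedness and local finiteness refer to the underlying undirected graph. $D$ is C-homogeneous if every isomorphism between finite connected induced subdigraphs extends to an automorphism of $D$. $N^+(x)=\{y: xy\in ED\}$, $N^-(x)=\{y: yx\in ED\}$. *)

From Stdlib Require Import List.
From mathcomp Require Import all_boot.
Set Implicit Arguments. Unset Strict Implicit. Unset Printing Implicit Defensive.

Definition is_digraph (V : Type) (E : V -> V -> Prop) : Prop :=
  (forall x, ~ E x x) /\ (forall x y, E x y -> ~ E y x).

Definition uadj (V : Type) (E : V -> V -> Prop) (x y : V) : Prop := E x y \/ E y x.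

Definition finite_set (V : Type) (A : V -> Prop) : Prop :=
  exists l : list V, forall x, A x <-> In x l.

Definition locally_finite (V : Type) (E : V -> V -> Prop) : Prop :=
  forall x, finite_set (uadj E x).

Inductive connected_in (V : Type) (E : V -> V -> Prop) (A : V -> Prop) : V -> V -> Prop :=
| cin_refl x : A x -> connected_in E A x x
| cin_step x y z : A x -> uadj E x y -> connected_in E A y z -> connected_in E A x z.

Definition connected_digraph (V : Type) (E : V -> V -> Prop) : Prop :=
  forall x y : V, connected_in E (fun _ => True) x y.

Definition connected_set (V : Type) (E : V -> V -> Prop) (A : V -> Prop) : Prop :=
  forall x y, A x -> A y -> connected_in E A x y.

Definition partial_iso (V : Type) (E : V -> V -> Prop) (A B : V -> Prop) (f : V -> V) : Prop :=
  (forall x, A x -> B (f x)) /\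
  (forall x y, A x -> A y -> f x = f y -> x = y) /\
  (forall y, B y -> exists x, A x /\ f x = y) /\
  (forall x y, A x -> A y -> (E x y <-> E (f x) (f y))).

Definition automorphism (V : Type) (E : V -> V -> Prop) (g : V -> V) : Prop :=
  (forall x y, g x = g y -> x = y) /\ (forall y, exists x, g x = y) /\
  (forall x y, E x y <-> E (g x) (g y)).

Definition C_homogeneous (V : Type) (E : V -> V -> Prop) : Prop :=
  forall (A B : V -> Prop) (f : V -> V),
    finite_set A -> finite_set B -> connected_set E A -> connected_set E B ->
    partial_iso E A B f ->
    exists g, automorphism E g /\ forall x, A x -> g x = f x.

Definition out_nbhd (V : Type) (E : V -> V -> Prop) (x : V) : V -> Prop := fun y => E x y.
Definition in_nbhd (V : Type) (E : V -> V -> Prop) (x : V) : V -> Prop := fun y => E y x.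

Definition induced_iso_to (V W : Type) (E : V -> V -> Prop) (S : V -> Prop)
    (F : W -> W -> Prop) : Prop :=
  exists h : W -> V,
    (forall a b, h a = h b -> a = b) /\
    (forall y, S y <-> exists a, h a = y) /\
    (forall a b, E (h a) (h b) <-> F a b).

Definition C4_edge (i j : 'I_4) : Prop := nat_of_ord j = ((nat_of_ord i).+1 %% 4)%N.

(* If N+(x) induces a directed 4-cycle, then by C-homogeneity so does every
   out-neighbourhood, and D is transitive on arcs and on induced 2-paths u -> v -> w.
   Hence every arc w -> v has a common in-neighbour; counting in the finite set
   N-(v) shows that it is unique, so it also dominates every out-neighbour of v
   not adjacent to w.  Let a0 -> a1 -> a2 -> a3 -> a0 be the 4-cycle N+(x).  Each
   out-neighbour s <> a1 of a0 is an out-neighbour of a3, a non-neighbour of x, or a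
   common in-neighbour of x and a3; the first two kinds occur at most once each.
   A vertex of the third kind forces its successor in the 4-cycle N+(a0) to be of
   both other kinds, so that successor is not a1 and every other vertex is of the
   third kind; following the cycle to the predecessor of a1 is then impossible.
   So the third kind is empty, and the three out-neighbours cannot fit into the
   other two.  In-neighbourhoods are handled by reversing all arcs. *)

From mathcomp Require Import all_boot.
From Stdlib Require Import List Classical ClassicalEpsilon.
Set Implicit Arguments. Unset Strict Implicit. Unset Printing Implicit Defensive.

Lemma C4_edgeE (a b : 'I_4) : C4_edge a b <-> b = ordS a.
Proof. by split=> [ab | ->]; first apply: val_inj. Qed.

Lemma C4_edge_succ_unique (a b b' : 'I_4) : C4_edge a b -> C4_edge a b' -> b = b'.
Proof. by move=> /C4_edgeE-> /C4_edgeE->. Qed.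

Lemma C4_edge_pred_unique (a a' b : 'I_4) : C4_edge a b -> C4_edge a' b -> a = a'.
Proof. by move=> /C4_edgeE-> /C4_edgeE/(can_inj (@ordSK 4)). Qed.

Lemma C4_edge_third (a b d : 'I_4) : C4_edge a b -> d != a -> d != b ->
  (C4_edge b d /\ ~ (C4_edge a d \/ C4_edge d a)) \/
  (C4_edge d a /\ ~ (C4_edge d b \/ C4_edge b d)).
Proof.
move: a b d; do 3![case=> [[|[|[|[|?]]]] ?] //].
all: by [left; split=> //; case | right; split=> //; case].
Qed.

Lemma C4_edge_cycle (a : 'I_4) : exists b c d,
  [/\ C4_edge a b, C4_edge b c, C4_edge c d & C4_edge d a] /\
  ~ (C4_edge a c \/ C4_edge c a) /\ ~ (C4_edge b d \/ C4_edge d b).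
Proof.
exists (ordS a), (ordS (ordS a)), (ordS (ordS (ordS a))).
by case: a => [[|[|[|[|?]]]] ?] //; do !split; case.
Qed.

Lemma C4_edge_rev (a b : 'I_4) : C4_edge (rev_ord b) (rev_ord a) <-> C4_edge a b.
Proof. by move: a b; do 2![case=> [[|[|[|[|?]]]] ?] //]. Qed.

Definition out_C4 (V : Type) (E : V -> V -> Prop) (c : V) : Prop :=
  induced_iso_to E (out_nbhd E c) C4_edge.

Section OutC4.

Variables (V : Type) (E : V -> V -> Prop) (c : V).
Hypothesis hc : out_C4 E c.

Lemma out_C4_nonempty : exists y, E c y.
Proof. by case: hc => h [_ [h_onto _]]; exists (h ord0); apply: (h_onto _).2; exists ord0. Qed.

Lemma out_C4_succ_unique y u u' :
  E c y -> E c u -> E c u' -> E y u -> E y u' -> u = u'.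
Proof.
case: hc => h [_ [h_onto h_edge]].
move=> /(h_onto _).1 [a <-] /(h_onto _).1 [b <-] /(h_onto _).1 [b' <-].
by move=> /h_edge ab /h_edge ab'; rewrite (C4_edge_succ_unique ab ab').
Qed.

Lemma out_C4_pred_unique y u u' :
  E c y -> E c u -> E c u' -> E u y -> E u' y -> u = u'.
Proof.
case: hc => h [_ [h_onto h_edge]].
move=> /(h_onto _).1 [b <-] /(h_onto _).1 [a <-] /(h_onto _).1 [a' <-].
by move=> /h_edge ab /h_edge a'b; rewrite (C4_edge_pred_unique ab a'b).
Qed.

Lemma out_C4_third y z u : E c y -> E c z -> E c u -> E y z -> u <> y -> u <> z ->
  (E z u /\ ~ uadj E y u) \/ (E u y /\ ~ uadj E u z).
Proof.
case: hc => h [_ [h_onto h_edge]].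
move=> /(h_onto _).1 [a <-] /(h_onto _).1 [b <-] /(h_onto _).1 [d <-] /h_edge ab.
move=> da db; rewrite /uadj !h_edge.
apply: C4_edge_third => //; apply/eqP; [move: da | move: db].
all: by apply: contra_not; apply: congr1.
Qed.

Lemma out_C4_cycle y : E c y -> exists p q r, [/\ E c p, E c q & E c r] /\
  [/\ E y p, E p q, E q r & E r y] /\ ~ uadj E y q /\ ~ uadj E p r.
Proof.
case: hc => h [_ [h_onto h_edge]] /(h_onto _).1 [a <-].
have [b [b' [d [[ab bb' b'd da] [nab' nbd]]]]] := C4_edge_cycle a.
have in_c e : E c (h e) by apply: (h_onto _).2; exists e.
exists (h b), (h b'), (h d); split; first by split; apply: in_c.
by split; [split; apply/h_edge | rewrite /uadj !h_edge].
Qed.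

End OutC4.

Section Homogeneity.

Variables (V : Type) (E : V -> V -> Prop).
Hypothesis HD : is_digraph E.

Lemma edge_neq a b : E a b -> a <> b.
Proof. by move=> ab ab_eq; rewrite ab_eq in ab; apply: HD.1 ab. Qed.

Lemma path2_neq a b c : E a b -> E b c -> a <> c.
Proof. by move=> ab bc ac; rewrite ac in ab; apply: HD.2 ab bc. Qed.

Lemma uadj_sym a b : uadj E a b -> uadj E b a.
Proof. by case; [right | left]. Qed.

Lemma connected_in_trans A a b c :
  connected_in E A a b -> connected_in E A b c -> connected_in E A a c.
Proof. by elim=> // a' b' c' Aa ab _ IH /IH; apply: cin_step. Qed.

Lemma connected_set_star A c :
  A c -> (forall a, A a -> a = c \/ uadj E a c) -> connected_set E A.
Proof.
move=> Ac star a b Aa Ab; apply: (@connected_in_trans _ _ c).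
- case: (star a Aa) => [->|ac]; first exact: cin_refl.
  exact: cin_step Aa ac (cin_refl _ Ac).
- case: (star b Ab) => [->|bc]; first exact: cin_refl.
  exact: cin_step Ac (uadj_sym bc) (cin_refl _ Ab).
Qed.

Hypothesis HC : C_homogeneous E.

Lemma C_homogeneous_extend (ps : list (V * V)) :
  (forall a a' b b', In (a, a') ps -> In (b, b') ps -> a = b <-> a' = b') ->
  (forall a a' b b', In (a, a') ps -> In (b, b') ps -> E a b <-> E a' b') ->
  connected_set E (fun a => In a (map fst ps)) ->
  connected_set E (fun a => In a (map snd ps)) ->
  exists g, automorphism E g /\ forall a a', In (a, a') ps -> g a = a'.
Proof.
move=> ps_eq ps_edge conn_dom conn_cod.
pose f a := epsilon (inhabits a) (fun a' => In (a, a') ps).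
have fE a a' : In (a, a') ps -> f a = a'.
  move=> aa'.
  have af := epsilon_spec (inhabits a) (fun a' => In (a, a') ps) (ex_intro _ a' aa').
  exact: (ps_eq _ _ _ _ af aa').1 erefl.
have in_map (g : V * V -> V) a :
    In a (map g ps) -> exists a' a'', In (a', a'') ps /\ g (a', a'') = a.
  by case/in_map_iff=> [[a' a''] [<- ?]]; exists a', a''.
have fin (g : V * V -> V) : finite_set (fun a => In a (map g ps)) by exists (map g ps).
have f_iso : partial_iso E (fun a => In a (map fst ps)) (fun a => In a (map snd ps)) f.
  split; [|split; [|split]].
  - move=> _ /in_map [a [a' [aa' <-]]]; rewrite /= (fE _ _ aa').
    by apply/in_map_iff; exists (a, a').
  - move=> _ _ /in_map [a [a' [aa' <-]]] /in_map [b [b' [bb' <-]]] /=.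
    rewrite (fE _ _ aa') (fE _ _ bb'); exact: (ps_eq _ _ _ _ aa' bb').2.
  - move=> _ /in_map [a [a' [aa' <-]]]; exists a; split; last exact: fE.
    by apply/in_map_iff; exists (a, a').
  - move=> _ _ /in_map [a [a' [aa' <-]]] /in_map [b [b' [bb' <-]]] /=.
    rewrite (fE _ _ aa') (fE _ _ bb'); exact: ps_edge.
have [g [autg gf]] := HC (fin _) (fin _) conn_dom conn_cod f_iso.
exists g; split=> // a a' aa'; rewrite gf ?(fE _ _ aa') //.
by apply/in_map_iff; exists (a, a').
Qed.

Lemma C_homogeneous_vertex_transitive u v : exists g, automorphism E g /\ g u = v.
Proof.
case: (@C_homogeneous_extend [:: (u, v)]).
- by move=> a a' b b' /= [[<- <-]|[]] [[<- <-]|[]].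
- by move=> a a' b b' /= [[<- <-]|[]] [[<- <-]|[]]; split=> /HD.1.
- by apply: (@connected_set_star _ u); [left | move=> a /= [?|[]]; subst; left].
- by apply: (@connected_set_star _ v); [left | move=> a /= [?|[]]; subst; left].
by move=> g [autg gE]; exists g; split=> //; apply: gE; left.
Qed.

Lemma C_homogeneous_arc_transitive u v u' v' :
  E u v -> E u' v' -> exists g, automorphism E g /\ g u = u' /\ g v = v'.
Proof.
move=> uv u'v'; have [irr asym] := HD.
have := edge_neq uv; have := edge_neq u'v' => nuv nu'v'.
case: (@C_homogeneous_extend [:: (u, u'); (v, v')]).
- by move=> a a' b b' /= [[? ?]|[[? ?]|[]]] [[? ?]|[[? ?]|[]]]; subst; intuition congruence.
- by move=> a a' b b' /= [[? ?]|[[? ?]|[]]] [[? ?]|[[? ?]|[]]]; subst; firstorder.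
- apply: (@connected_set_star _ u); first by left.
  by move=> a /= [?|[?|[]]]; subst; [left | right; right].
- apply: (@connected_set_star _ u'); first by left.
  by move=> a /= [?|[?|[]]]; subst; [left | right; right].
by move=> g [autg gE]; exists g; split=> //; split; apply: gE; [left | right; left].
Qed.

Lemma C_homogeneous_path_transitive u v w u' v' w' :
  E u v -> E v w -> ~ uadj E u w -> E u' v' -> E v' w' -> ~ uadj E u' w' ->
  exists g, automorphism E g /\ [/\ g u = u', g v = v' & g w = w'].
Proof.
move=> uv vw nuw u'v' v'w' nu'w'; have [irr asym] := HD.
have := edge_neq uv; have := edge_neq vw; have := path2_neq uv vw.
have := edge_neq u'v'; have := edge_neq v'w'; have := path2_neq u'v' v'w'.
rewrite /uadj in nuw nu'w' => ? ? ? ? ? ?.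
case: (@C_homogeneous_extend [:: (u, u'); (v, v'); (w, w')]).
- by move=> a a' b b' /= [[? ?]|[[? ?]|[[? ?]|[]]]]
    [[? ?]|[[? ?]|[[? ?]|[]]]]; subst; intuition congruence.
- by move=> a a' b b' /= [[? ?]|[[? ?]|[[? ?]|[]]]]
    [[? ?]|[[? ?]|[[? ?]|[]]]]; subst; firstorder.
- apply: (@connected_set_star _ v); first by right; left.
  by move=> a /= [?|[?|[?|[]]]]; subst; [right; left | left | right; right].
- apply: (@connected_set_star _ v'); first by right; left.
  by move=> a /= [?|[?|[?|[]]]]; subst; [right; left | left | right; right].
move=> g [autg gE]; exists g; split=> //.
by split; apply: gE; [left | right; left | right; right; left].
Qed.

Lemma automorphism_out_nbhd_iso (W : Type) (F : W -> W -> Prop) g c :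
  automorphism E g -> induced_iso_to E (out_nbhd E c) F ->
  induced_iso_to E (out_nbhd E (g c)) F.
Proof.
move=> [g_inj [g_onto g_edge]] [h [h_inj [h_onto h_edge]]].
exists (fun a => g (h a)); split; [|split].
- by move=> a b /g_inj /h_inj.
- move=> y; split=> [|[a <-]]; last by apply: (g_edge _ _).1; apply: (h_onto _).2; exists a.
  by have [y' <-] := g_onto y; move=> /(g_edge _ _).2 /(h_onto _).1 [a <-]; exists a.
- by move=> a b; rewrite -g_edge.
Qed.

Lemma C_homogeneous_out_nbhd_iso (W : Type) (F : W -> W -> Prop) u v :
  induced_iso_to E (out_nbhd E u) F -> induced_iso_to E (out_nbhd E v) F.
Proof.
have [g [autg <-]] := C_homogeneous_vertex_transitive u v.
exact: automorphism_out_nbhd_iso.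
Qed.

End Homogeneity.

Lemma finite_set_sub (V : Type) (A B : V -> Prop) :
  finite_set A -> (forall x, B x -> A x) -> finite_set B.
Proof.
move=> [l Al] BA.
exists (List.filter (fun x => is_left (excluded_middle_informative (B x))) l).
by move=> x; rewrite filter_In -Al; case: excluded_middle_informative; firstorder.
Qed.

Lemma NoDup_map_inj_in (A B : Type) (f : A -> B) (l : list A) a b :
  NoDup (map f l) -> In a l -> In b l -> f a = f b -> a = b.
Proof.
elim: l => [|c l IH] //= /NoDup_cons_iff [fc_l uniq_l] [<-|al] [<-|bl] // fab.
- by case: fc_l; rewrite fab; apply/in_map_iff; exists b.
- by case: fc_l; rewrite -fab; apply/in_map_iff; exists a.
- exact: IH.
Qed.

Lemma finite_onto_injective (V : Type) (P : V -> Prop) (f : V -> V) :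
  finite_set P -> (forall b, P b -> exists2 a, P a & f a = b) ->
  forall a b, P a -> P b -> f a = f b -> a = b.
Proof.
move=> [l Pl] f_onto a b Pa Pb.
pose l' := nodup (fun x y => excluded_middle_informative (x = y)) l.
have Pl' x : P x <-> In x l' by rewrite nodup_In.
have uniq_fl' : NoDup (map f l').
  apply: (NoDup_incl_NoDup (NoDup_nodup _ _)); first by rewrite length_map; apply: le_n.
  by move=> y /Pl' /f_onto [x /Pl' x_l' <-]; apply/in_map_iff; exists x.
exact: NoDup_map_inj_in uniq_fl' ((Pl' _).1 Pa) ((Pl' _).1 Pb).
Qed.

Section EveryOutC4.

Variables (V : Type) (E : V -> V -> Prop).
Hypotheses (HD : is_digraph E) (HC : C_homogeneous E) (Hlf : locally_finite E).
Hypothesis hC4 : forall v, out_C4 E v.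

Lemma arc_common_in_neighbour w v : E w v -> exists z, E z w /\ E z v.
Proof.
move=> wv; pose c := w; have [y cy] := out_C4_nonempty (hC4 c).
have [p [_ [_ [[cp _ _] [[yp _ _ _] _]]]]] := out_C4_cycle (hC4 c) cy.
have [g [[_ [_ g_edge]] [<- <-]]] := C_homogeneous_arc_transitive HD HC yp wv.
by exists (g c); split; apply: (g_edge _ _).1.
Qed.

Lemma path_common_in_neighbour u v w :
  E u v -> E v w -> ~ uadj E u w -> exists z, [/\ E z u, E z v & E z w].
Proof.
move=> uv vw nuw; pose c := u; have [y cy] := out_C4_nonempty (hC4 c).
have [p [q [_ [[cp cq _] [[yp pq _ _] [nyq _]]]]]] := out_C4_cycle (hC4 c) cy.
have [g [[_ [_ g_edge]] [<- <- <-]]] :=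
  C_homogeneous_path_transitive HD HC yp pq nyq uv vw nuw.
by exists (g c); split; apply: (g_edge _ _).1.
Qed.

(* Each in-neighbour y of v has a unique out-neighbour f y with f y -> v (both
   lie in the 4-cycle N+(y)), and f maps the finite set N-(v) onto itself by
   the previous lemma; hence f is injective. *)
Lemma arc_common_in_neighbour_unique w v z z' :
  E w v -> E z w -> E z v -> E z' w -> E z' v -> z = z'.
Proof.
move=> wv zw zv z'w z'v.
have fin : finite_set (in_nbhd E v) by apply: (finite_set_sub (Hlf v)) => y; right.
pose f y := epsilon (inhabits y) (fun u => E y u /\ E u v).
have fE y u : E y v -> E y u -> E u v -> f y = u.
  move=> yv yu uv.
  have [yfy fyv] := epsilon_spec (inhabits y) (fun u => E y u /\ E u v) (ex_intro _ u (conj yu uv)).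
  exact: (out_C4_pred_unique (hC4 y) yv yfy yu fyv uv).
apply: (finite_onto_injective (f := f) fin) => //.
- by move=> b bv; have [a [ab av]] := arc_common_in_neighbour bv; exists a; last exact: fE.
- by rewrite (fE _ _ zv zw wv) (fE _ _ z'v z'w wv).
Qed.

Lemma in_neighbour_extend_path w v z u :
  E w v -> E z w -> E z v -> E v u -> ~ uadj E w u -> E z u.
Proof.
move=> wv zw zv vu nwu.
have [z' [z'w z'v z'u]] := path_common_in_neighbour wv vu nwu.
by rewrite (arc_common_in_neighbour_unique wv zw zv z'w z'v).
Qed.

Section Configuration.

Variables x a0 a1 a3 : V.
Hypotheses (xa0 : E x a0) (xa1 : E x a1) (xa3 : E x a3).
Hypotheses (a0a1 : E a0 a1) (a3a0 : E a3 a0) (a1a3 : ~ uadj E a1 a3).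

Lemma out_a0_not_out_x s : E a0 s -> s <> a1 -> ~ E x s.
Proof.
move=> a0s sa1 xs; apply: sa1.
exact: (out_C4_succ_unique (hC4 x) xa0 xs xa1 a0s a0a1).
Qed.

Lemma out_a0_adj_a3 s : E a0 s -> s <> a1 -> uadj E s a3.
Proof.
move=> a0s sa1; apply: NNPP => nsa3; apply: (out_a0_not_out_x a0s sa1).
by apply: (in_neighbour_extend_path a3a0 xa3 xa0 a0s) => a3s; apply/nsa3/uadj_sym.
Qed.

Lemma out_a0_out_a3_unique s s' : E a0 s -> E a0 s' -> E a3 s -> E a3 s' -> s = s'.
Proof.
move=> a0s a0s' a3s a3s'.
exact: (out_C4_succ_unique (hC4 a3) a3a0 a3s a3s' a0s a0s').
Qed.

Lemma out_a0_nonadj_x_unique s s' :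
  E a0 s -> E a0 s' -> ~ uadj E x s -> ~ uadj E x s' -> s = s'.
Proof.
move=> a0s a0s' nxs nxs'; have [z [zx za0]] := arc_common_in_neighbour xa0.
have zs := in_neighbour_extend_path xa0 zx za0 a0s nxs.
have zs' := in_neighbour_extend_path xa0 zx za0 a0s' nxs'.
exact: (out_C4_succ_unique (hC4 z) za0 zs zs' a0s a0s').
Qed.

Lemma out_a0_cases s : E a0 s -> s <> a1 -> (E s x /\ E s a3) \/ E a3 s \/ ~ uadj E x s.
Proof.
move=> a0s sa1; case: (out_a0_adj_a3 a0s sa1) => [sa3|]; last by right; left.
case: (classic (uadj E x s)) => [[xs|sx]|]; last by right; right.
- by case: (out_a0_not_out_x a0s sa1 xs).
- by left.
Qed.

Lemma succ_of_common_in_x_a3 t s :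
  E t x /\ E t a3 -> E t s -> E a0 s -> E a3 s /\ ~ uadj E x s.
Proof.
move=> [tx ta3] ts a0s.
have sx : s <> x by move=> sx; rewrite sx in a0s; apply: HD.2 xa0 a0s.
have sa3 : s <> a3 by move=> sa3; rewrite sa3 in a0s; apply: HD.2 a3a0 a0s.
case: (out_C4_third (hC4 t) tx ta3 ts xa3 sx sa3) => // [[s_x ns_a3]].
case: (classic (s = a1)) => [sa1 | sa1].
  by rewrite sa1 in s_x; case: (HD.2 _ _ xa1 s_x).
by case: ns_a3; apply: out_a0_adj_a3.
Qed.

Lemma out_a0_common_in_x_a3 s s' : E a0 s -> s <> a1 -> E a0 s' -> s <> s' ->
  E a3 s' -> ~ uadj E x s' -> E s x /\ E s a3.
Proof.
move=> a0s sa1 a0s' ss' a3s' nxs'.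
case: (out_a0_cases a0s sa1) => [// | [a3s | nxs]]; case: ss'.
- exact: out_a0_out_a3_unique.
- exact: out_a0_nonadj_x_unique.
Qed.

Lemma out_a0_cycle_absurd p q r : E a0 p -> E a0 q -> E a0 r ->
  E a1 p -> E p q -> E q r -> E r a1 -> False.
Proof.
move=> a0p a0q a0r a1p pq qr ra1.
have pa1 : p <> a1 := nesym (edge_neq HD a1p).
have qa1 : q <> a1 := nesym (path2_neq HD a1p pq).
have ra1' : r <> a1 := edge_neq HD ra1.
have pq' := edge_neq HD pq; have qr' := edge_neq HD qr; have pr := path2_neq HD pq qr.
have not_common_r : ~ (E r x /\ E r a3).
  move=> common_r; have [a3a1 _] := succ_of_common_in_x_a3 common_r ra1 a0a1.
  by apply: a1a3; right.
have not_common_p : ~ (E p x /\ E p a3).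
  move=> common_p; have [a3q nxq] := succ_of_common_in_x_a3 common_p pq a0q.
  exact/not_common_r/(out_a0_common_in_x_a3 a0r ra1' a0q (nesym qr')).
have not_common_q : ~ (E q x /\ E q a3).
  move=> common_q; have [a3r nxr] := succ_of_common_in_x_a3 common_q qr a0r.
  exact/not_common_p/(out_a0_common_in_x_a3 a0p pa1 a0r pr).
have classes s : E a0 s -> s <> a1 -> ~ (E s x /\ E s a3) -> E a3 s \/ ~ uadj E x s.
  by move=> a0s sa1 nds; case: (out_a0_cases a0s sa1).
case: (classes p a0p pa1 not_common_p) (classes q a0q qa1 not_common_q)
  (classes r a0r ra1' not_common_r) => [?|?] [?|?] [?|?];
  by [ apply: pq'; apply: out_a0_out_a3_unique | apply: pq'; apply: out_a0_nonadj_x_unique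
     | apply: qr'; apply: out_a0_out_a3_unique | apply: qr'; apply: out_a0_nonadj_x_unique
     | apply: pr; apply: out_a0_out_a3_unique | apply: pr; apply: out_a0_nonadj_x_unique ].
Qed.

End Configuration.

Lemma out_C4_everywhere_void (x : V) : False.
Proof.
have [a0 xa0] := out_C4_nonempty (hC4 x).
have [a1 [_ [a3 [[xa1 _ xa3] [[a0a1 _ _ a3a0] [_ a1a3]]]]]] := out_C4_cycle (hC4 x) xa0.
have [p [q [r [[a0p a0q a0r] [[a1p pq qr ra1] _]]]]] := out_C4_cycle (hC4 a0) a0a1.
exact: (out_a0_cycle_absurd xa0 xa1 xa3 a0a1 a3a0 a1a3 a0p a0q a0r a1p pq qr ra1).
Qed.

End EveryOutC4.

Lemma C_homogeneous_not_out_C4 (V : Type) (E : V -> V -> Prop) x :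
  is_digraph E -> C_homogeneous E -> locally_finite E -> ~ out_C4 E x.
Proof.
move=> HD HC Hlf hx; apply: (out_C4_everywhere_void HD HC Hlf _ x) => v.
exact: C_homogeneous_out_nbhd_iso hx.
Qed.

Lemma connected_in_mono (V : Type) (E1 E2 : V -> V -> Prop) A a b :
  (forall a b, uadj E1 a b -> uadj E2 a b) -> connected_in E1 A a b -> connected_in E2 A a b.
Proof.
move=> E12; elim=> [a' Aa'|a' b' c' Aa' ab _ IH]; first exact: cin_refl.
exact: cin_step Aa' (E12 _ _ ab) IH.
Qed.

Section Flip.

Variables (V : Type) (E : V -> V -> Prop).
Local Notation E' := (fun a b => E b a).

Lemma uadj_flip a b : uadj E' a b <-> uadj E a b.
Proof. by rewrite /uadj; tauto. Qed.

Lemma connected_set_flip A : connected_set E' A <-> connected_set E A.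
Proof.
by split=> conn a b Aa Ab; apply: connected_in_mono (conn a b Aa Ab) => a' b' /uadj_flip.
Qed.

Lemma is_digraph_flip : is_digraph E -> is_digraph E'.
Proof. by move=> [irr asym]; split=> [a | a b /asym]. Qed.

Lemma locally_finite_flip : locally_finite E -> locally_finite E'.
Proof. by move=> lf v; have [l vl] := lf v; exists l => y; rewrite -vl uadj_flip. Qed.

Lemma C_homogeneous_flip : C_homogeneous E -> C_homogeneous E'.
Proof.
move=> HC A B f finA finB /connected_set_flip connA /connected_set_flip connB.
move=> [fA [f_inj [f_onto f_edge]]].
have [|g [[g_inj [g_onto g_edge]] gf]] := HC A B f finA finB connA connB.
  by split=> //; split=> //; split=> // a b Aa Ab; apply: f_edge.
by exists g; split=> //; split=> //; split=> // a b; apply: g_edge.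
Qed.

Lemma in_nbhd_C4_flip x : induced_iso_to E (in_nbhd E x) C4_edge -> out_C4 E' x.
Proof.
move=> [h [h_inj [h_onto h_edge]]]; exists (fun a => h (rev_ord a)); split; [|split].
- by move=> a b /h_inj /rev_ord_inj.
- move=> y; apply: iff_trans (h_onto y) _.
  by split=> [[a <-] | [a <-]]; [exists (rev_ord a); rewrite rev_ordK | exists (rev_ord a)].
- by move=> a b; rewrite h_edge C4_edge_rev.
Qed.

End Flip.

Theorem lemma3p3 (V : Type) (E : V -> V -> Prop)
  (HD : is_digraph E) (Hconn : connected_digraph E) (Hlf : locally_finite E)
  (HC : C_homogeneous E) (x : V) :
  ~ induced_iso_to E (out_nbhd E x) C4_edge /\ ~ induced_iso_to E (in_nbhd E x) C4_edge.
Proof.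
split; first exact: C_homogeneous_not_out_C4.
move=> in_C4; apply: (C_homogeneous_not_out_C4 _ _ _ (in_nbhd_C4_flip in_C4)).
- exact: is_digraph_flip.
- exact: C_homogeneous_flip.
- exact: locally_finite_flip.
Qed.
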